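(* In any execution of \textsf{Murmur} (described in the context) in which the correct gossip network is connected, \textsf{Murmur} satisfies totality: if some correct process delivers a message, then every correct process eventually delivers a message.
   Context: System model: a fixed set $\Pi$ of processes, some Byzantine and the rest correct ($\Pi_C$ denotes the correct ones), communicating asynchronously over reliable authenticated point-to-point links (every message between correct processes is eventually delivered); signatures cannot be forged; a designated sender $\sigma$ with a public key. \textsf{Murmur} (parameter $G$): upon initialization each correct process samples $\bar G$ from a Poisson distribution with mean $G$, chooses $\bar G$ distinct processes uniformly at random as its gossip sample, and sends GossipSubscribe to each. Upon receiving GossipSubscribe from $\pi$, a correct process adds $\pi$ to its gossip sample and, if it has already set its variable $delivered$ to some (message, signature) pair, sends $\pi$ a Gossip message with that pair. Procedure dispatch(message, signature): if $delivered=\bot$, set $delivered$ to the pair, send a Gossip message with the pair to every process in the gossip sample, and deliver the message. The sender broadcasts $m$ by calling dispatch$(m,\mathrm{sign}_\sigma(m))$; upon receiving a Gossip message whose signature verifies against $\sigma$'s key, a correct process calls dispatch on it. The correct gossip network is the undirected graph with vertex set $\Pi_C$ in which correct $\pi,\rho$ are adjacent iff $\rho$ is eventually in $\pi$'s gossip sample (this relation is symmetric). *)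

From mathcomp Require Import all_boot.
From Stdlib Require Import Relations.
From Stdlib Require List.

Set Implicit Arguments.
Unset Strict Implicit.
Unset Printing Implicit Defensive.

Section Murmur.

(* P : the finite set of processes Pi; correct : the correct processes Pi_C;
   sigma : the designated sender; sign : sigma's signing function;
   verify m s : the signature s on m verifies against sigma's public key. *)
Variables (P : finType) (M Sg : Type).
Variable correct : {set P}.
Variable sigma : P.
Variable sign : M -> Sg.
Variable verify : M -> Sg -> bool.

Inductive NetMsg := GossipSubscribe | Gossip of (M * Sg).

Record LState := LS { ls_delivered : option (M * Sg); ls_sample : {set P} }.

(* A message in transit: (send time stamp, source, destination, content). *)
Definition Packet := (nat * P * P * NetMsg)%type.
Definition pk_src (r : Packet) : P := r.1.1.2.
Definition pk_dst (r : Packet) : P := r.1.2.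

Record Config := Cfg { cf_loc : P -> LState; cf_pool : seq Packet }.

Definition upd (f : P -> LState) (p : P) (s : LState) : P -> LState :=
  fun r => if r == p then s else f r.

Definition dispatch (n : nat) (c : Config) (p : P) (d : M * Sg) : Config :=
  let st := cf_loc c p in
  match ls_delivered st with
  | None => Cfg (upd (cf_loc c) p (LS (Some d) (ls_sample st)))
                (cf_pool c ++ [seq (n, p, q, Gossip d) | q <- enum (ls_sample st)])
  | Some _ => c
  end.

Definition handle (n : nat) (c : Config) (p src : P) (x : NetMsg) : Config :=
  match x with
  | GossipSubscribe =>
      let st := cf_loc c p in
      let loc' := upd (cf_loc c) p (LS (ls_delivered st) (src |: ls_sample st)) in
      match ls_delivered st with
      | Some d => Cfg loc' (cf_pool c ++ [:: (n, p, src, Gossip d)])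
      | None => Cfg loc' (cf_pool c)
      end
  | Gossip d => if verify d.1 d.2 then dispatch n c p d else c
  end.

Inductive Label :=
  | LIdle
  | LBcast of M
  | LRecv of nat                   (* the i-th message in transit is delivered by the link *)
  | LByz of P & P & NetMsg.        (* Byzantine src makes correct dst receive x *)

Definition valid (c : Config) (l : Label) : Prop :=
  match l with
  | LIdle => True
  | LBcast _ => sigma \in correct
  | LRecv i => exists r, List.nth_error (cf_pool c) i = Some r /\ pk_dst r \in correct
  | LByz src dst _ => src \notin correct /\ dst \in correct
  end.

Definition apply (n : nat) (c : Config) (l : Label) : Config :=
  match l with
  | LIdle => c
  | LBcast m => dispatch n c sigma (m, sign m)
  | LRecv i =>
      match List.nth_error (cf_pool c) i with
      | Some (_, src, dst, x) =>
          handle n (Cfg (cf_loc c) (take i (cf_pool c) ++ drop i.+1 (cf_pool c))) dst src x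
      | None => c
      end
  | LByz src dst x => handle n c dst src x
  end.

Definition init (S0 : P -> {set P}) : Config :=
  Cfg (fun p => LS None (S0 p))
      (flatten [seq [seq (0, p, q, GossipSubscribe) | q <- enum (S0 p)]
               | p <- enum correct]).

Definition execution (S0 : P -> {set P}) (c : nat -> Config) (lab : nat -> Label) : Prop :=
  c 0 = init S0 /\
  forall n, valid (c n) (lab n) /\ c n.+1 = apply n.+1 (c n) (lab n).

Definition reliable (c : nat -> Config) (lab : nat -> Label) : Prop :=
  forall n (r : Packet), List.In r (cf_pool (c n)) ->
    pk_src r \in correct -> pk_dst r \in correct ->
    exists k i, n <= k /\ lab k = LRecv i /\ List.nth_error (cf_pool (c k)) i = Some r.

(* correct gossip network: correct p, q adjacent iff q is eventually in p's sample *)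
Definition gossip_adj (c : nat -> Config) (p q : P) : Prop :=
  p \in correct /\ q \in correct /\ exists n, q \in ls_sample (cf_loc (c n) p).

Definition gossip_connected (c : nat -> Config) : Prop :=
  forall p q, p \in correct -> q \in correct -> clos_refl_sym_trans P (gossip_adj c) p q.

Definition delivers (c : nat -> Config) (p : P) : Prop :=
  exists n, ls_delivered (cf_loc (c n) p) <> None.

Definition totality (c : nat -> Config) : Prop :=
  (exists p, p \in correct /\ delivers c p) ->
  forall q, q \in correct -> delivers c q.

End Murmur.

From mathcomp Require Import all_boot.
From Stdlib Require Import Relations.
From Stdlib Require List.

Set Implicit Arguments.
Unset Strict Implicit.
Unset Printing Implicit Defensive.

(* Every reachable configuration satisfies four invariants: delivered pairs
   carry valid signatures; a subscription in transit from s to q already has q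
   in the sample of s; for correct p, q with q in the sample of p, either p is
   in the sample of q or a subscription from p to q is in transit; and if
   moreover p has delivered, then q has delivered or a validly signed gossip
   from p to q is in transit.  Deliveries and samples only grow, so reliable
   links eventually make every edge of the correct gossip network symmetric
   and push a delivery across it in both directions; connectivity then spreads
   a delivery to every correct process. *)

Lemma clos_refl_sym_trans_iff (A : Type) (R : relation A) (Q : A -> Prop) :
  (forall x y, R x y -> Q x <-> Q y) ->
  forall x y, clos_refl_sym_trans A R x y -> Q x <-> Q y.
Proof. by move=> RQ x y; elim=> [? ? /RQ | | ? ? _ | ? ? ? _ ? _]; tauto. Qed.

Lemma In_cat T (x : T) s1 s2 : List.In x (s1 ++ s2) <-> List.In x s1 \/ List.In x s2.
Proof. by elim: s1 => [|y s1 IH] /=; [tauto | rewrite IH; tauto]. Qed.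

Lemma In_map T U (f : T -> U) y s : List.In y (map f s) <-> exists x, f x = y /\ List.In x s.
Proof.
have -> : map f s = List.map f s by elim: s => //= x s ->.
exact: List.in_map_iff.
Qed.

Lemma In_flatten T (x : T) ss : List.In x (flatten ss) <-> exists s, List.In s ss /\ List.In x s.
Proof.
have -> : flatten ss = List.concat ss.
  by elim: ss => //= s ss ->; elim: s => //= y s ->.
exact: List.in_concat.
Qed.

Lemma InE (T : eqType) (x : T) s : List.In x s <-> x \in s.
Proof.
elim: s => [|y s IH] //=; rewrite in_cons; split.
- by case=> [->|/IH ->]; rewrite ?eqxx ?orbT.
- by case/orP=> [/eqP->|/IH]; [left | right].
Qed.

Lemma nth_error_take_drop T (s : seq T) i y :
  List.nth_error s i = Some y -> s = take i s ++ y :: drop i.+1 s.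
Proof.
elim: s i => [|z s IH] [|i] //= si; first by case: si => ->; rewrite drop0.
by rewrite -(IH i si).
Qed.

Lemma In_remove_nth T (s : seq T) i y x : List.nth_error s i = Some y ->
  List.In x s <-> x = y \/ List.In x (take i s ++ drop i.+1 s).
Proof. by move=> si; rewrite {1}(nth_error_take_drop si) !In_cat /=; intuition subst; tauto. Qed.

Definition deliv (P : finType) (M Sg : Type) (c : Config P M Sg) (p : P) : option (M * Sg) :=
  ls_delivered (cf_loc c p).

Definition sample (P : finType) (M Sg : Type) (c : Config P M Sg) (p : P) : {set P} :=
  ls_sample (cf_loc c p).

Section Handle.
Variables (P : finType) (M Sg : Type) (verify : M -> Sg -> bool).
Variables (n : nat) (c : Config P M Sg) (p src : P) (x : NetMsg M Sg).

Let c' := handle verify n c p src x.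

Lemma handle_loc_neq y : y != p -> cf_loc c' y = cf_loc c y.
Proof.
move=> /negbTE yp; rewrite /c' /handle /dispatch /upd.
by case: x => [|d]; [|case: ifP => _]; case: (ls_delivered (cf_loc c p)); rewrite //= yp.
Qed.

Lemma sample_handle :
  sample c' p = if x is GossipSubscribe then src |: sample c p else sample c p.
Proof.
rewrite /c' /sample /handle /dispatch.
by case: x => [|d]; [|case: ifP => _]; case: (ls_delivered (cf_loc c p)); rewrite //= /upd ?eqxx.
Qed.

Lemma deliv_handle :
  deliv c' p = if deliv c p is Some d then Some d
               else if x is Gossip d then (if verify d.1 d.2 then Some d else None) else None.
Proof.
rewrite /c' /deliv /handle /dispatch.
by case: x => [|d]; [|case: ifP => _]; case E: (ls_delivered (cf_loc c p)); rewrite /= /upd ?eqxx.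
Qed.

Lemma pool_handle_old r : List.In r (cf_pool c) -> List.In r (cf_pool c').
Proof.
rewrite /c' /handle /dispatch => rin.
by case: x => [|d]; [|case: ifP => _]; case: (ls_delivered (cf_loc c p)) => [e|];
  rewrite /= ?In_cat; tauto.
Qed.

Lemma pool_handle_new r : List.In r (cf_pool c') ->
  List.In r (cf_pool c) \/ exists q d, r = (n, p, q, Gossip d).
Proof.
rewrite /c' /handle /dispatch.
case: x => [|d]; [|case: ifP => _]; case: (ls_delivered (cf_loc c p)) => [e|] //=;
  rewrite ?In_cat => rin; try by left.
all: case: rin => [|rin]; first by left.
- by case: rin => // <-; right; exists src, e.
- by move/In_map: rin => [q [<- _]]; right; exists q, d.
Qed.

Lemma gossip_handle q d : deliv c' p = Some d -> q \in sample c' p ->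
  (deliv c p <> None /\ q \in sample c p) \/ List.In (n, p, q, Gossip d) (cf_pool c').
Proof.
rewrite deliv_handle sample_handle /c' /deliv /sample /handle /dispatch.
case: x => [|e]; [|case: ifP => _]; case: (ls_delivered (cf_loc c p)) => [e'|] //= [<-] qS;
  try by left.
- move: qS; rewrite in_setU1 => /orP[/eqP->|qS]; last by left.
  by right; rewrite In_cat; right; left.
- right; rewrite In_cat; right; apply/In_map.
  by exists q; split; last by apply/InE; rewrite mem_enum.
Qed.

End Handle.

Section Invariant.
Variables (P : finType) (M Sg : Type) (correct : {set P}) (verify : M -> Sg -> bool).
Implicit Types (c : Config P M Sg) (p q : P).

Record gossip_inv c : Prop := GossipInv {
  inv_verified : forall p d, deliv c p = Some d -> verify d.1 d.2;
  inv_subscribed : forall t s q,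
    List.In (t, s, q, GossipSubscribe _ _) (cf_pool c) -> q \in sample c s;
  inv_sample_sym : forall p q, p \in correct -> q \in correct -> q \in sample c p ->
    p \in sample c q \/ exists t, List.In (t, p, q, GossipSubscribe _ _) (cf_pool c);
  inv_forward : forall p q, p \in correct -> q \in correct ->
    deliv c p <> None -> q \in sample c p ->
    deliv c q <> None \/
    exists t d, List.In (t, p, q, Gossip d) (cf_pool c) /\ verify d.1 d.2
}.

Record extends c c' : Prop := Extends {
  extends_deliv : forall p, deliv c p <> None -> deliv c' p <> None;
  extends_sample : forall p, sample c p \subset sample c' p
}.

Lemma extends_refl c : extends c c.
Proof. by split. Qed.

Lemma extends_trans c1 c2 c3 : extends c1 c2 -> extends c2 c3 -> extends c1 c3.
Proof.
move=> [D12 S12] [D23 S23]; split=> [p /D12 /D23 //|p].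
exact: subset_trans (S12 p) (S23 p).
Qed.

(* Every step removes at most the received packet (t0, src, p, x) from
   transit, giving c1, and then runs the handler of p on c1. *)
Section HandleStep.
Variables (c c1 : Config P M Sg) (n t0 : nat) (p src : P) (x : NetMsg M Sg).
Hypothesis c_inv : gossip_inv c.
Hypothesis loc_c1 : cf_loc c1 = cf_loc c.
Hypothesis pool_c1_sub : forall r, List.In r (cf_pool c1) -> List.In r (cf_pool c).
Hypothesis pool_c_sub : forall r, List.In r (cf_pool c) ->
  List.In r (cf_pool c1) \/ r = (t0, src, p, x).
Hypothesis subscribe_in_transit : x = GossipSubscribe _ _ -> src \in correct ->
  List.In (t0, src, p, GossipSubscribe _ _) (cf_pool c).

Let c' := handle verify n c1 p src x.

Let deliv_c1 : deliv c1 = deliv c. Proof. by rewrite /deliv loc_c1. Qed.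
Let sample_c1 : sample c1 = sample c. Proof. by rewrite /sample loc_c1. Qed.

Let deliv_c'_neq y : y != p -> deliv c' y = deliv c y.
Proof. by move=> yp; rewrite -deliv_c1 /deliv handle_loc_neq. Qed.

Let sample_c'_neq y : y != p -> sample c' y = sample c y.
Proof. by move=> yp; rewrite -sample_c1 /sample handle_loc_neq. Qed.

Let deliv_c'_p : deliv c' p = if deliv c p is Some d then Some d
  else if x is Gossip d then (if verify d.1 d.2 then Some d else None) else None.
Proof. by rewrite /c' deliv_handle deliv_c1. Qed.

Let sample_c'_p :
  sample c' p = if x is GossipSubscribe then src |: sample c p else sample c p.
Proof. by rewrite /c' sample_handle sample_c1. Qed.

Lemma extends_handle : extends c c'.
Proof.
split=> y.
- have [->|yp] := eqVneq y p; last by rewrite deliv_c'_neq.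
  by rewrite deliv_c'_p; case: (deliv c p).
- have [->|yp] := eqVneq y p; last by rewrite sample_c'_neq.
  by rewrite sample_c'_p; case: x => [|d]; rewrite ?subsetUr.
Qed.

Let deliv_c'_mono y : deliv c y <> None -> deliv c' y <> None.
Proof. exact: extends_deliv extends_handle y. Qed.

Let sample_c'_mono y : {subset sample c y <= sample c' y}.
Proof. exact/subsetP/(extends_sample extends_handle). Qed.

Lemma handle_verified y d : deliv c' y = Some d -> verify d.1 d.2.
Proof.
have [->|yp] := eqVneq y p; last by rewrite deliv_c'_neq //; exact: inv_verified.
rewrite deliv_c'_p.
case E: (deliv c p) => [e|]; first by case=> <-; exact: inv_verified E.
by case: x => [|e] //; case: ifP => // ? [<-].
Qed.

Lemma handle_subscribed t s q :
  List.In (t, s, q, GossipSubscribe _ _) (cf_pool c') -> q \in sample c' s.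
Proof.
case/pool_handle_new => [/pool_c1_sub /(inv_subscribed c_inv) /sample_c'_mono //|].
by case=> ? [? []].
Qed.

Lemma handle_sample_sym p' q : p' \in correct -> q \in correct -> q \in sample c' p' ->
  p' \in sample c' q \/ exists t, List.In (t, p', q, GossipSubscribe _ _) (cf_pool c').
Proof.
move=> p'C qC.
have subscribed_to_p : x = GossipSubscribe _ _ -> src \in sample c' p.
  by move=> xS; rewrite sample_c'_p xS setU11.
have old_edge : q \in sample c p' -> p' \in sample c' q \/
    exists t, List.In (t, p', q, GossipSubscribe _ _) (cf_pool c').
  move=> /(inv_sample_sym c_inv p'C qC) [/sample_c'_mono|[t /pool_c_sub [tr|[_ -> -> xS]]]].
  - by left.
  - by right; exists t; exact: pool_handle_old.
  - by left; exact: subscribed_to_p.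
have [p'p|p'p] := eqVneq p' p; last by rewrite (sample_c'_neq p'p).
subst p'; rewrite sample_c'_p; case E: x => [|d]; last exact: old_edge.
rewrite in_setU1 => /orP[/eqP qsrc|]; last exact: old_edge.
subst q; left; apply/sample_c'_mono/(inv_subscribed c_inv).
exact: subscribe_in_transit E qC.
Qed.

Lemma handle_forward p' q : p' \in correct -> q \in correct ->
  deliv c' p' <> None -> q \in sample c' p' ->
  deliv c' q <> None \/
  exists t d, List.In (t, p', q, Gossip d) (cf_pool c') /\ verify d.1 d.2.
Proof.
move=> p'C qC.
have old_edge : deliv c p' <> None -> q \in sample c p' -> deliv c' q <> None \/
    exists t d, List.In (t, p', q, Gossip d) (cf_pool c') /\ verify d.1 d.2.
  move=> /(inv_forward c_inv p'C qC) fwd /fwd.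
  case=> [/deliv_c'_mono|[t [d [/pool_c_sub [tr|[_ _ -> xG]] vd]]]].
  - by left.
  - by right; exists t, d; split=> //; exact: pool_handle_old.
  - by left; rewrite deliv_c'_p -xG vd; case: (deliv c p).
have [p'p|p'p] := eqVneq p' p; last by rewrite (deliv_c'_neq p'p) (sample_c'_neq p'p).
subst p'; case E: (deliv c' p) => [d|] // _ qp.
case: (gossip_handle E qp) => [|rin]; first by rewrite deliv_c1 sample_c1 => -[].
by right; exists n, d; split=> //; exact: handle_verified E.
Qed.

Lemma inv_extends_handle : gossip_inv c' /\ extends c c'.
Proof.
split; last exact: extends_handle.
split; [exact: handle_verified | exact: handle_subscribed | exact: handle_sample_sym |
        exact: handle_forward].
Qed.

End HandleStep.
End Invariant.

Lemma In_init_pool (P : finType) (M Sg : Type) (correct : {set P}) (S0 : P -> {set P}) r :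
  List.In r (cf_pool (init M Sg correct S0)) <->
  exists p q, [/\ p \in correct, q \in S0 p & r = (0, p, q, GossipSubscribe M Sg)].
Proof.
rewrite In_flatten; split.
- case=> _ [/In_map [p [<- /InE]]]; rewrite mem_enum => pC /In_map [q [<- /InE]].
  by rewrite mem_enum => qS; exists p, q.
- case=> p [q [pC qS ->]]; exists [seq (0, p, q, GossipSubscribe M Sg) | q <- enum (S0 p)].
  split; apply/In_map; [exists p | exists q]; by split; last by apply/InE; rewrite mem_enum.
Qed.

Lemma inv_init (P : finType) (M Sg : Type) (correct : {set P}) (verify : M -> Sg -> bool)
  (S0 : P -> {set P}) : gossip_inv correct verify (init M Sg correct S0).
Proof.
split=> //.
- by move=> t s q /In_init_pool [p [q' [_ qS [_ -> ->]]]].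
- by move=> p q pC _ qS; right; exists 0; apply/In_init_pool; exists p, q.
Qed.

Section Protocol.
Variables (P : finType) (M Sg : Type) (correct : {set P}) (sigma : P).
Variables (sign : M -> Sg) (verify : M -> Sg -> bool).
Hypothesis sign_ok : forall m, verify m (sign m).

Local Notation step := (apply sigma sign verify).

Lemma inv_extends_step n (c : Config P M Sg) (l : Label P M Sg) :
  gossip_inv correct verify c -> valid correct sigma c l ->
  gossip_inv correct verify (step n c l) /\ extends c (step n c l).
Proof.
move=> c_inv; case: l => [|m|i|src dst x] /=.
- by split=> //; exact: extends_refl.
- move=> _; have -> : dispatch n c sigma (m, sign m) =
                      handle verify n c sigma sigma (Gossip (m, sign m)) by rewrite /= sign_ok.
  by apply: (inv_extends_handle (c1 := c) n (t0 := 0)) => // r; left.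
- move=> [[[[t s] d] x] [ci _]]; rewrite ci.
  apply: (inv_extends_handle n (t0 := t)) => //= [r|r|xS _].
  + by move=> rin; apply/(In_remove_nth _ ci); right.
  + by move/(In_remove_nth _ ci) => -[->|]; [right | left].
  + by rewrite -xS; exact: List.nth_error_In ci.
- move=> [srcN _]; apply: (inv_extends_handle (c1 := c) n (t0 := 0)) => // [r|]; first by left.
  by move=> _ srcC; rewrite srcC in srcN.
Qed.

Lemma recv_subscribe n (c : Config P M Sg) i t s q :
  List.nth_error (cf_pool c) i = Some (t, s, q, GossipSubscribe M Sg) ->
  s \in sample (step n c (LRecv P M Sg i)) q.
Proof. by move=> ci; rewrite /= ci sample_handle setU11. Qed.

Lemma recv_gossip n (c : Config P M Sg) i t s q d :
  List.nth_error (cf_pool c) i = Some (t, s, q, Gossip d) -> verify d.1 d.2 ->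
  deliv (step n c (LRecv P M Sg i)) q <> None.
Proof. by move=> ci vd; rewrite /= ci deliv_handle vd; case: (deliv _ q). Qed.

Section Execution.
Variables (S0 : P -> {set P}) (c : nat -> Config P M Sg) (lab : nat -> Label P M Sg).
Hypothesis exec : execution correct sigma sign verify S0 c lab.
Hypothesis links : reliable correct c lab.

Lemma execution_inv k : gossip_inv correct verify (c k).
Proof.
elim: k => [|k IH]; first by rewrite exec.1; exact: inv_init.
by have [v ->] := exec.2 k; case: (inv_extends_step k.+1 IH v).
Qed.

Lemma execution_extends k l : k <= l -> extends (c k) (c l).
Proof.
move/subnKC <-; elim: (l - k) => [|j IH]; first by rewrite addn0; exact: extends_refl.
apply: extends_trans IH _; rewrite addnS; have [v ->] := exec.2 (k + j).
exact: (inv_extends_step _ (execution_inv _) v).2.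
Qed.

Lemma delivered_forwarded k l p q : p \in correct -> q \in correct ->
  deliv (c k) p <> None -> q \in sample (c l) p -> delivers c q.
Proof.
move=> pC qC dp qp; pose m := maxn k l.
have dp' : deliv (c m) p <> None.
  exact: extends_deliv (execution_extends (leq_maxl k l)) p dp.
have qp' : q \in sample (c m) p.
  exact: subsetP (extends_sample (execution_extends (leq_maxr k l)) p) q qp.
case: (inv_forward (execution_inv m) pC qC dp' qp') => [dq|[t [d [rin vd]]]].
  by exists m.
have [k' [i [_ [labi ri]]]] := links rin pC qC.
by exists k'.+1; have [_ ->] := exec.2 k'; rewrite labi; exact: recv_gossip ri vd.
Qed.

Lemma sample_eventually_sym k p q : p \in correct -> q \in correct ->
  q \in sample (c k) p -> exists l, p \in sample (c l) q.
Proof.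
move=> pC qC /(inv_sample_sym (execution_inv k) pC qC) [pq|[t rin]]; first by exists k.
have [k' [i [_ [labi ri]]]] := links rin pC qC.
by exists k'.+1; have [_ ->] := exec.2 k'; rewrite labi; exact: recv_subscribe ri.
Qed.

Lemma gossip_adj_delivers p q : gossip_adj correct c p q -> delivers c p <-> delivers c q.
Proof.
move=> [pC [qC [k qp]]]; split=> [[k' dp]|[k' dq]].
- exact: delivered_forwarded dp qp.
- have [l pq] := sample_eventually_sym pC qC qp.
  exact: delivered_forwarded dq pq.
Qed.

End Execution.
End Protocol.

Theorem lemma2 (P : finType) (M Sg : Type) (correct : {set P}) (sigma : P)
  (sign : M -> Sg) (verify : M -> Sg -> bool)
  (sign_ok : forall m, verify m (sign m))
  (S0 : P -> {set P}) (c : nat -> Config P M Sg) (lab : nat -> Label P M Sg) :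
  execution correct sigma sign verify S0 c lab ->
  reliable correct c lab ->
  gossip_connected correct c ->
  totality correct c.
Proof.
move=> exec links connected [p [pC dp]] q qC.
have adj_iff := gossip_adj_delivers sign_ok exec links.
exact/(clos_refl_sym_trans_iff adj_iff (connected p q pC qC)).
Qed.
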